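(* Let $n\ge1$, let $\lambda=(\lambda_1,\dots,\lambda_l)$ and $\mu=(\mu_1,\dots,\mu_m)$ be decompositions of $n+1$ with $1<\mu_m\le\lambda_l$, and let $\mu'=(\mu_1,\dots,\mu_{m-1},\mu_m-1,1)$. Let $G=\langle A_{2,n}(S_{\lambda|\mu})\rangle$ and let $H$ be the subgroup of $G$ generated by $S_{\lambda|\mu'}$ (note $S_{\lambda|\mu'}\subseteq S_{\lambda|\mu}$). Then the set of right cosets of $H$ in $G$ is $$\{H\}\cup\{H\,y_nx_n^{\varepsilon_n}y_{n-1}x_{n-1}^{\varepsilon_{n-1}}\cdots y_kx_k^{\varepsilon_k}\ :\ n-\mu_m+2\le k\le n,\ \varepsilon_j\in\{0,1\}\}.$$
   Context: A decomposition of $N$ is a finite sequence of positive integers with sum $N$. The stopover set of $\lambda=(\lambda_1,\dots,\lambda_l)$ is $\overline{s}(\lambda)=\{\lambda_1,\lambda_1+\lambda_2,\dots,\lambda_1+\dots+\lambda_{l-1}\}$, and $S_{\lambda|\mu}=\{x_i : 1\le i\le n,\ i\notin\overline{s}(\lambda)\}\cup\{y_j: 1\le j\le n,\ j\notin\overline{s}(\mu)\}$. The group $\langle A_{2,n}\rangle$ has generators $X=\{x_1,\dots,x_n,y_1,\dots,y_n\}$ and relations: $z^2=e$ ($z\in X$); $(x_ix_{i+1})^4=(y_iy_{i+1})^4=e$ ($1\le i\le n-1$); $(x_iy_i)^3=e$ ($1\le i\le n$); $(zt)^2=e$ for every other pair of distinct $z,t\in X$; $(x_ix_{i+1}y_i)^3=(x_ix_{i+1}y_{i+1})^3=(x_iy_iy_{i+1})^3=(x_{i+1}y_iy_{i+1})^3=e$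 ($1\le i\le n-1$); $(x_ix_{i+1}x_{i+2})^4=(y_iy_{i+1}y_{i+2})^4=e$ ($1\le i\le n-2$). For $S\subseteq X$, $\langle A_{2,n}(S)\rangle$ is the group generated by $S$ subject to exactly those relations above involving only elements of $S$. *)

From mathcomp Require Import all_boot.
Set Implicit Arguments. Unset Strict Implicit. Unset Printing Implicit Defensive.

(* Generators x_i (gx i) and y_i (gy i); only indices 1..n are meaningful. *)
Inductive gen := gx of nat | gy of nat.

Definition gidx (g : gen) : nat := match g with gx i => i | gy i => i end.
Definition validg (n : nat) (g : gen) : bool := (1 <= gidx g) && (gidx g <= n).

(* the pairs with a non-(zt)^2 pairwise relation: {x_i,x_{i+1}}, {y_i,y_{i+1}}, {x_i,y_i} *)
Definition special (z t : gen) : bool :=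
  match z, t with
  | gx i, gx j => (j == i.+1) || (i == j.+1)
  | gy i, gy j => (j == i.+1) || (i == j.+1)
  | gx i, gy j => i == j
  | gy i, gx j => i == j
  end.

Definition pw (r : seq gen) (k : nat) : seq gen := flatten (nseq k r).

Inductive relator (n : nat) : seq gen -> Prop :=
| R_sq z : validg n z -> relator n [:: z; z]
| R_xx i : 1 <= i -> i < n -> relator n (pw [:: gx i; gx i.+1] 4)
| R_yy i : 1 <= i -> i < n -> relator n (pw [:: gy i; gy i.+1] 4)
| R_xy i : 1 <= i -> i <= n -> relator n (pw [:: gx i; gy i] 3)
| R_other z t : validg n z -> validg n t -> z <> t -> ~~ special z t ->
    relator n (pw [:: z; t] 2)
| R_t1 i : 1 <= i -> i < n -> relator n (pw [:: gx i; gx i.+1; gy i] 3)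
| R_t2 i : 1 <= i -> i < n -> relator n (pw [:: gx i; gx i.+1; gy i.+1] 3)
| R_t3 i : 1 <= i -> i < n -> relator n (pw [:: gx i; gy i; gy i.+1] 3)
| R_t4 i : 1 <= i -> i < n -> relator n (pw [:: gx i.+1; gy i; gy i.+1] 3)
| R_x3 i : 1 <= i -> i.+2 <= n -> relator n (pw [:: gx i; gx i.+1; gx i.+2] 4)
| R_y3 i : 1 <= i -> i.+2 <= n -> relator n (pw [:: gy i; gy i.+1; gy i.+2] 4).

(* Words in the free group: letters (true, z) = z, (false, z) = z^-1. *)
Definition letter := (bool * gen)%type.
Definition word := seq letter.
Definition winv (w : word) : word := rev (map (fun a => (~~ a.1, a.2)) w).
Definition pos (r : seq gen) : word := map (pair true) r.
Definition onS (S : pred gen) (w : word) : bool := all (fun a => S a.2) w.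

(* Equality in the presented group <A_{2,n}(S)>: the congruence on words over S
   generated by free cancellation and the relators involving only elements of S. *)
Inductive weq (n : nat) (S : pred gen) : word -> word -> Prop :=
| weq_refl w : onS S w -> weq n S w w
| weq_sym u v : weq n S u v -> weq n S v u
| weq_trans u v w : weq n S u v -> weq n S v w -> weq n S u w
| weq_cat u1 v1 u2 v2 : weq n S u1 v1 -> weq n S u2 v2 ->
    weq n S (u1 ++ u2) (v1 ++ v2)
| weq_cancel b z : S z -> weq n S [:: (b, z); (~~ b, z)] [::]
| weq_rel r : relator n r -> all S r -> weq n S (pos r) [::].

Definition inH (n : nat) (S S' : pred gen) (w : word) : Prop :=
  exists u : word, onS S' u /\ weq n S u w.

Definition decomposition (N : nat) (s : seq nat) : bool :=
  all (fun a => 0 < a) s && (sumn s == N).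

Definition stops (s : seq nat) : seq nat :=
  [seq sumn (take k s) | k <- iota 1 (size s).-1].

Definition Sset (n : nat) (lam mu : seq nat) : pred gen :=
  fun g => match g with
           | gx i => (1 <= i) && (i <= n) && (i \notin stops lam)
           | gy j => (1 <= j) && (j <= n) && (j \notin stops mu)
           end.

Definition mu_prime (mu : seq nat) : seq nat :=
  take (size mu).-1 mu ++ [:: (last 0 mu).-1; 1].

Definition rep (n k : nat) (eps : nat -> bool) : seq gen :=
  flatten [seq gy j :: (if eps j then [:: gx j] else [::])
          | j <- rev (iota k (n.+1 - k))].

From mathcomp Require Import all_boot zify.
From Stdlib Require Import Setoid Morphisms.
Set Implicit Arguments. Unset Strict Implicit. Unset Printing Implicit Defensive.

(* A coset enumeration. With p = n + 2 - mu_m, the hypothesis mu_m <= lam_l puts every x_j, y_j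
   with p <= j <= n into S_{lam|mu}, and S_{lam|mu'} is S_{lam|mu} without y_n. Since G is
   generated by involutions, it suffices that right multiplication by each generator z sends every
   listed coset H r (r = rep n k eps, or r = 1) to a listed coset, i.e. r z = h r' in G with h in H.
   Generators of H of small index are pushed left through r block by block, by commutations and
   y_{a+1} x_{a+1} x_a = (x_a x_{a+1})^2 y_{a+1} x_{a+1}; y_{k-1} appends a block; a generator of
   index k acts on the last block y_k x_k^e_k; one of index a + 1 > k commutes down to the blocks of
   indices a + 1 and a, which the relations among x_a, x_{a+1}, y_a, y_{a+1} rewrite into letters
   of H followed by two new blocks. *)

Definition block (j : nat) (e : bool) : seq gen := gy j :: (if e then [:: gx j] else [::]).

Lemma all_block (P : pred gen) j e : P (gy j) -> P (gx j) -> all P (block j e).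
Proof. by move=> hy hx; case: e; rewrite /= hy ?hx. Qed.

Definition apart (z t : gen) : bool := ((gidx z).+1 < gidx t) || ((gidx t).+1 < gidx z).

Lemma onS_pos (P : pred gen) u : onS P (pos u) = all P u.
Proof. by rewrite /onS /pos all_map. Qed.

Section Presentation.
Variables (n : nat) (S : pred gen).
Hypothesis S_valid : forall z, S z -> validg n z.

Lemma weq_onS u v : weq n S u v -> onS S u /\ onS S v.
Proof.
elim=> {u v} //=.
- by move=> u v _ [].
- by move=> u v w _ [? _] _ [_ ?].
- by move=> u1 v1 u2 v2 _ [h1 h2] _ [h3 h4]; rewrite /onS !all_cat -!/(onS S _) h1 h2 h3 h4.
- by move=> b z Sz; rewrite /onS /= Sz.
- by move=> r _ Sr; rewrite onS_pos.
Qed.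

(* Equality in G of positive words, extended by the diagonal to words that are
   not over S: this makes it an equivalence relation compatible with [cat],
   so that relations can be applied inside words with [rewrite]. *)
Definition eqG (u v : seq gen) : Prop :=
  all S u = all S v /\ (all S u -> weq n S (pos u) (pos v)).

Lemma weq_eqG u v : weq n S (pos u) (pos v) -> eqG u v.
Proof. by move=> h; have [] := weq_onS h; rewrite /eqG !onS_pos => -> ->. Qed.

Global Instance eqG_equiv : Equivalence eqG.
Proof.
split.
- by move=> u; split=> // Su; apply: weq_refl; rewrite onS_pos.
- by move=> u v [e h]; split=> // Sv; apply/weq_sym/h; rewrite e.
- move=> u v w [e1 h1] [e2 h2]; split; first by rewrite e1.
  by move=> Su; apply: weq_trans (h1 Su) (h2 _); rewrite -e1.
Qed.

Global Instance eqG_cat : Proper (eqG ==> eqG ==> eqG) (@cat gen).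
Proof.
move=> u1 v1 [e1 h1] u2 v2 [e2 h2]; split; first by rewrite !all_cat e1 e2.
by rewrite all_cat /pos !map_cat => /andP[S1 S2]; exact: weq_cat (h1 S1) (h2 S2).
Qed.

Global Instance eqG_cons z : Proper (eqG ==> eqG) (cons z).
Proof. move=> u v huv; rewrite -(cat1s z u) -(cat1s z v); apply: eqG_cat => //; reflexivity. Qed.

Lemma eqG_relator r : relator n r -> all S r -> eqG r [::].
Proof. by move=> hr Sr; apply: weq_eqG; apply: weq_rel. Qed.

Lemma eqG_cancel z tl : S z -> eqG [:: z, z & tl] tl.
Proof.
move=> Sz; change (eqG ([:: z; z] ++ tl) ([::] ++ tl)); apply: eqG_cat; last reflexivity.
by apply: eqG_relator; [apply/R_sq/S_valid | rewrite /= Sz].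
Qed.

Lemma eqG_cat_rev t : all S t -> eqG (t ++ rev t) [::].
Proof.
elim: t => [|z t IH] /=; first reflexivity.
case/andP=> Sz St; rewrite rev_cons -cats1 catA IH //=.
exact: (eqG_cancel [::]).
Qed.

Lemma eqG_tail u v tl : eqG u v -> eqG (u ++ tl) (v ++ tl).
Proof. by move=> huv; rewrite huv; reflexivity. Qed.

Lemma eqG_split s t : eqG (s ++ t) [::] -> eqG s (rev t).
Proof.
move=> h; have : all S (s ++ t) by rewrite h.1.
rewrite all_cat => /andP[_ St].
by rewrite -[s]cats0 -(eqG_cat_rev St) catA h; reflexivity.
Qed.

Lemma eqG_rotate s t : eqG (s ++ t) [::] -> eqG (t ++ s) [::].
Proof.
move=> h; have : all S (s ++ t) by rewrite h.1.
rewrite all_cat => /andP[_ St].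
by rewrite (eqG_split h) eqG_cat_rev //; reflexivity.
Qed.

Lemma eqG_rev w : eqG w [::] -> eqG (rev w) [::].
Proof. by move=> h; symmetry; apply: (@eqG_split [::]). Qed.

Lemma eqG_comm z t tl : S z -> S t -> z <> t -> ~~ special z t ->
  eqG [:: z, t & tl] [:: t, z & tl].
Proof.
move=> Sz St ne sp; apply: (eqG_tail tl (@eqG_split [:: z; t] [:: z; t] _)).
by apply: eqG_relator; [apply: R_other => //; exact: S_valid | rewrite /= Sz St].
Qed.

Lemma eqG_braid b tl : 1 <= b <= n -> S (gx b) -> S (gy b) ->
  eqG [:: gx b, gy b, gx b & tl] [:: gy b, gx b, gy b & tl].
Proof.
case/andP=> b1 bn Sx Sy.
apply: (eqG_tail tl (@eqG_split [:: gx b; gy b; gx b] [:: gy b; gx b; gy b] _)).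
by apply: eqG_relator; [exact: R_xy | rewrite /= Sx Sy].
Qed.

Lemma eqG_comm_apart z t tl : S z -> S t -> apart z t -> eqG [:: z, t & tl] [:: t, z & tl].
Proof.
move=> Sz St hzt; apply: eqG_comm => //; move: hzt {Sz St}.
all: by case: z => i; case: t => j; rewrite /apart /= ?negb_or => hij //; try case; lia.
Qed.

Lemma eqG_comm_word z Q tl : S z -> all S Q -> all (apart z) Q ->
  eqG (Q ++ z :: tl) (z :: Q ++ tl).
Proof.
move=> Sz; elim: Q => [|t Q IH] /=; first by reflexivity.
case/andP=> St SQ /andP[zt zQ]; rewrite IH // eqG_comm_apart //; first by reflexivity.
by rewrite /apart orbC.
Qed.

Lemma weq_letter b z : S z -> weq n S [:: (b, z)] [:: (true, z)].
Proof.
move=> Sz; have Sz1 c : onS S [:: (c, z)] by rewrite /onS /= Sz.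
case: b; first exact: weq_refl.
apply: (@weq_trans _ _ _ ([:: (false, z)] ++ pos [:: z; z])).
  rewrite -[X in weq _ _ X _]cats0; apply: weq_cat; first exact: weq_refl.
  by apply/weq_sym/weq_rel; [apply/R_sq/S_valid | rewrite /= Sz].
change (weq n S ([:: (false, z); (true, z)] ++ [:: (true, z)]) ([::] ++ [:: (true, z)])).
by apply: weq_cat; [exact: weq_cancel | exact: weq_refl].
Qed.

Lemma weq_pos_snd w : onS S w -> weq n S w (pos (map snd w)).
Proof.
elim: w => [|[b z] w IH] /=; first by move=> _; exact: weq_refl.
by case/andP=> Sz Sw; apply: (@weq_cat _ _ [:: _] [:: _]); [exact: weq_letter | exact: IH].
Qed.

Lemma weq_pos_winv r : all S r -> weq n S (pos r ++ winv (pos r)) [::].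
Proof.
elim: r => [|z r IH] /=; first by move=> _; exact: weq_refl.
case/andP=> Sz Sr; have Sz1 c : onS S [:: (c, z)] by rewrite /onS /= Sz.
rewrite /winv /= rev_cons -cats1 -/(winv _) catA.
apply: (@weq_trans _ _ _ ([:: (true, z)] ++ [::] ++ [:: (false, z)])).
  apply: (@weq_cat _ _ [:: _] [:: _]); first exact: weq_refl.
  by apply: weq_cat; [exact: IH | exact: weq_refl].
exact: weq_cancel.
Qed.

Lemma inH_mul_winv (S' : pred gen) h r w : all S' h -> all S r ->
  weq n S w (pos (h ++ r)) -> inH n S S' (w ++ winv (pos r)).
Proof.
move=> S'h Sr e; exists (pos h); split; first by rewrite onS_pos.
have Sh : onS S (pos h) by have [_] := weq_onS e; rewrite /pos map_cat /onS all_cat => /andP[].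
have Sw : onS S (winv (pos r)) by rewrite /onS all_rev !all_map; exact: Sr.
rewrite -[pos h]cats0; apply: weq_trans (weq_cat (weq_refl _ Sh) (weq_sym (weq_pos_winv Sr))) _.
by rewrite catA -map_cat; apply: weq_cat (weq_sym e) (weq_refl _ Sw).
Qed.

Section Triangle.
Variables a b c : gen.
Hypothesis abc : eqG (pw [:: a; b; c] 3) [::].

Lemma triangle_rot : eqG (pw [:: b; c; a] 3) [::].
Proof. exact: (@eqG_rotate [:: a] [:: b; c; a; b; c; a; b; c]). Qed.

Lemma triangle_rev : eqG (pw [:: c; b; a] 3) [::].
Proof. exact: (eqG_rev abc). Qed.

Lemma triangle3 tl : eqG [:: a, b, c & tl] [:: c, b, a, c, b, a & tl].
Proof. exact: (eqG_tail tl (@eqG_split [:: a; b; c] [:: a; b; c; a; b; c] abc)). Qed.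

Lemma triangle4 tl : eqG [:: a, b, c, a & tl] [:: c, b, a, c, b & tl].
Proof. exact: (eqG_tail tl (@eqG_split [:: a; b; c; a] [:: b; c; a; b; c] abc)). Qed.

End Triangle.

Section Neighbours.
Variable a : nat.
Hypotheses (a_gt0 : 0 < a) (a_lt_n : a < n).
Local Notation X := (gx a).
Local Notation U := (gx a.+1).
Local Notation Y := (gy a).
Local Notation V := (gy a.+1).
Hypotheses (SX : S X) (SU : S U) (SV : S V).

Lemma comm_XV tl : eqG [:: X, V & tl] [:: V, X & tl].
Proof. by apply: eqG_comm => //; rewrite /= ?neq_ltn ?ltnSn. Qed.

Lemma braid_UV tl : eqG [:: U, V, U & tl] [:: V, U, V & tl].
Proof. by apply: eqG_braid => //; apply/andP. Qed.

Lemma triangle_XUV : eqG (pw [:: X; U; V] 3) [::].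
Proof. by apply: eqG_relator; [exact: R_t2 | rewrite /= SX SU SV]. Qed.

Lemma block_succ_mul_gx tl :
  eqG (block a.+1 true ++ X :: tl) ([:: X; U; X; U] ++ block a.+1 true ++ tl).
Proof.
rewrite /= (triangle3 (triangle_rev triangle_XUV)) -comm_XV -braid_UV; reflexivity.
Qed.

Lemma braid2_UV tl : eqG [:: V, U & tl] [:: U, V, U, V & tl].
Proof. by rewrite braid_UV eqG_cancel //; reflexivity. Qed.

Section WithY.
Hypothesis SY : S Y.

Lemma comm_YU tl : eqG [:: Y, U & tl] [:: U, Y & tl].
Proof. by apply: eqG_comm => //; rewrite /= ?neq_ltn ?ltnSn. Qed.

Lemma braid_XY tl : eqG [:: X, Y, X & tl] [:: Y, X, Y & tl].
Proof. by apply: eqG_braid => //; rewrite a_gt0 ltnW. Qed.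

Lemma triangle_XUY : eqG (pw [:: X; U; Y] 3) [::].
Proof. by apply: eqG_relator; [exact: R_t1 | rewrite /= SX SU SY]. Qed.

Lemma triangle_XYV : eqG (pw [:: X; Y; V] 3) [::].
Proof. by apply: eqG_relator; [exact: R_t3 | rewrite /= SX SY SV]. Qed.

Lemma triangle_UYV : eqG (pw [:: U; Y; V] 3) [::].
Proof. by apply: eqG_relator; [exact: R_t4 | rewrite /= SU SY SV]. Qed.

Lemma VYXU tl : eqG [:: V, Y, X, U & tl] [:: U, X, U, V, Y, X & tl].
Proof.
rewrite (triangle3 (triangle_rot (triangle_rot triangle_XUY))) comm_YU braid2_UV.
rewrite -comm_XV -(triangle4 triangle_XUV) braid_XY eqG_cancel //; reflexivity.
Qed.

Lemma VUYXU tl : eqG [:: V, U, Y, X, U & tl] [:: U, X, U, V, U, Y, X & tl].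
Proof.
rewrite (triangle4 (triangle_rot triangle_XUY)) comm_YU -braid_XY -comm_XV.
rewrite (triangle3 (triangle_rev triangle_XUV)) eqG_cancel // -comm_XV -braid_UV; reflexivity.
Qed.

Lemma VYV tl : eqG [:: V, Y, V & tl] [:: X, Y, X, V, Y, X & tl].
Proof.
symmetry; rewrite comm_XV (triangle4 triangle_XYV) eqG_cancel // -comm_XV eqG_cancel //.
reflexivity.
Qed.

Lemma VYXV tl : eqG [:: V, Y, X, V & tl] [:: X, Y, X, V, Y & tl].
Proof. by symmetry; rewrite comm_XV (triangle4 triangle_XYV) eqG_cancel //; reflexivity. Qed.

Lemma VUYV tl : eqG [:: V, U, Y, V & tl] [:: Y, U, V, U, Y & tl].
Proof.
symmetry; rewrite comm_YU (triangle4 triangle_UYV) eqG_cancel // comm_YU; reflexivity.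
Qed.

Lemma VUYXV tl : eqG [:: V, U, Y, X, V & tl] [:: Y, U, V, U, Y, X & tl].
Proof.
symmetry; rewrite comm_YU (triangle4 triangle_UYV) eqG_cancel // -comm_XV comm_YU.
reflexivity.
Qed.

Lemma block_pair_mul (P : pred gen) e1 e0 z : P X -> P U -> P Y -> gidx z = a.+1 ->
  exists h0 e1' e0', all P h0 /\
    forall tl, eqG (block a.+1 e1 ++ block a e0 ++ z :: tl)
                   (h0 ++ block a.+1 e1' ++ block a e0' ++ tl).
Proof.
move=> PX PU PY; case: z => _ /= ->; case: e1; case: e0.
- by exists [:: U; X; U], true, true; split=> [|tl]; [rewrite /= PU PX | exact: VUYXU].
- exists [::], false, false; split=> // tl /=.
  by rewrite comm_YU eqG_cancel //; reflexivity.
- by exists [:: U; X; U], false, true; split=> [|tl]; [rewrite /= PU PX | exact: VYXU].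
- by exists [::], true, false; split=> // tl /=; rewrite comm_YU; reflexivity.
- by exists [:: Y; U], true, true; split=> [|tl]; [rewrite /= PU PY | exact: VUYXV].
- by exists [:: Y; U], true, false; split=> [|tl]; [rewrite /= PU PY | exact: VUYV].
- by exists [:: X; Y; X], false, false; split=> [|tl]; [rewrite /= PX PY | exact: VYXV].
- by exists [:: X; Y; X], false, true; split=> [|tl]; [rewrite /= PX PY | exact: VYV].
Qed.

End WithY.
End Neighbours.
End Presentation.

Definition blocks (i k : nat) (eps : nat -> bool) : seq gen :=
  flatten [seq block j (eps j) | j <- rev (iota k (i - k))].

Lemma blocks_cat i j k eps : k <= j <= i -> blocks i k eps = blocks i j eps ++ blocks j k eps.
Proof.
case/andP=> kj ji; rewrite /blocks -flatten_cat -map_cat -rev_cat.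
have -> : i - k = (j - k) + (i - j) by lia.
by rewrite iotaD subnKC.
Qed.

Lemma blocks1 i eps : blocks i.+1 i eps = block i (eps i).
Proof. by rewrite /blocks subSn // subnn /= cats0. Qed.

Lemma eq_blocks i k eps eps' : {in [pred j | k <= j < i], eps =1 eps'} ->
  blocks i k eps = blocks i k eps'.
Proof.
move=> e; congr flatten; apply/eq_in_map => j; rewrite mem_rev mem_iota => hj.
by rewrite e // inE; lia.
Qed.

Lemma blocks_idx i k eps : all (fun z => k <= gidx z < i) (blocks i k eps).
Proof.
have : all (fun j => k <= j < i) (rev (iota k (i - k))).
  by rewrite all_rev; apply/allP => j; rewrite mem_iota; lia.
rewrite /blocks; elim: (rev _) => //= j js IH /andP[hj /IH]; rewrite all_cat => ->.
by case: (eps j); rewrite /= hj.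
Qed.

Lemma rep_blocks n k eps : rep n k eps = blocks n.+1 k eps.
Proof. by []. Qed.

Lemma rep_rec n k eps : k <= n -> rep n k eps = rep n k.+1 eps ++ block k (eps k).
Proof. by move=> kn; rewrite !rep_blocks (@blocks_cat _ k.+1) ?blocks1 //; apply/andP; split. Qed.

Lemma rep_top n eps : rep n n.+1 eps = [::].
Proof. by rewrite rep_blocks /blocks subnn. Qed.

Lemma rep_split n a k eps : k <= a -> a < n ->
  rep n k eps = rep n a.+2 eps ++ block a.+1 (eps a.+1) ++ block a (eps a) ++ blocks a k eps.
Proof.
move=> ka an; rewrite rep_blocks (@blocks_cat _ a.+2 k) ?(@blocks_cat a.+2 a.+1 k).
  by rewrite (@blocks_cat a.+1 a k) ?blocks1 //; lia.
all: lia.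
Qed.

Lemma rep_rec_upd n k eps b : k <= n ->
  rep n k [eta eps with k |-> b] = rep n k.+1 eps ++ block k b.
Proof.
move=> kn; rewrite rep_rec //= eqxx; congr (_ ++ _).
by apply: eq_blocks => i; rewrite inE /= => /andP[ki _]; rewrite gtn_eqF.
Qed.

Lemma rep_split_upd n a k eps e1 e0 : k <= a -> a < n ->
  rep n k [eta eps with a.+1 |-> e1, a |-> e0] =
  rep n a.+2 eps ++ block a.+1 e1 ++ block a e0 ++ blocks a k eps.
Proof.
move=> ka an; set eps' := [eta _ with _ |-> _, _ |-> _].
have [ea1 ea] : eps' a.+1 = e1 /\ eps' a = e0 by rewrite /= eqxx (ltn_eqF (ltnSn a)) eqxx.
rewrite (rep_split _ ka an) ea1 ea !rep_blocks; congr (_ ++ (_ ++ (_ ++ _))).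
all: apply: eq_blocks => i; rewrite inE /= => /andP[hi1 hi2].
all: by rewrite !ifN_eq //; apply/eqP; lia.
Qed.

Definition psums (s : seq nat) : seq nat := [seq sumn (take k s) | k <- iota 1 (size s)].

Lemma stops_rcons s l : stops (rcons s l) = psums s.
Proof.
rewrite /stops /psums size_rcons; apply/eq_in_map => k; rewrite mem_iota => hk.
by rewrite -cats1 takel_cat //; lia.
Qed.

Lemma stops_cat2 s l : stops (s ++ [:: l; 1]) = rcons (psums s) (sumn s + l).
Proof.
rewrite /stops /psums size_cat [size _]/=.
have -> : (size s + 2).-1 = size s + 1 by lia.
rewrite iotaD map_cat cats1 /=.
rewrite take_cat ltnNge leq_addl /= addnK sumn_cat /= addn0; congr rcons.
by apply/eq_in_map => k; rewrite mem_iota => hk; rewrite takel_cat //; lia.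
Qed.

Lemma psums_le s j : j \in psums s -> j <= sumn s.
Proof. by case/mapP=> k _ ->; rewrite -{2}(cat_take_drop k s) sumn_cat leq_addr. Qed.

Lemma sumn_in_psums s : 0 < size s -> sumn s \in psums s.
Proof. by move=> s_gt0; apply/mapP; exists (size s); rewrite ?take_size // mem_iota; lia. Qed.

Lemma mu_prime_rcons s l : mu_prime (rcons s l) = s ++ [:: l.-1; 1].
Proof. by rewrite /mu_prime size_rcons -cats1 take_size_cat // last_cat. Qed.

Definition below (k : nat) (z : gen) : bool :=
  match z with gx j => j < k | gy j => j.+1 < k end.

Section Cosets.
Variables (n : nat) (lam0 mu0 : seq nat) (l m : nat).
Hypotheses (sum_lam : sumn lam0 + l = n.+1) (sum_mu : sumn mu0 + m = n.+1).
Hypotheses (m_gt1 : 1 < m) (m_le_l : m <= l).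

Local Notation S := (Sset n (rcons lam0 l) (rcons mu0 m)).
Local Notation S' := (Sset n (rcons lam0 l) (mu_prime (rcons mu0 m))).
Local Notation p := (n + 2 - m).
Local Notation eqG := (eqG n S).

Lemma Sset_valid z : S z -> validg n z.
Proof. by case: z => j /= /andP[]. Qed.

Lemma Sset_high z : p <= gidx z <= n -> S z.
Proof.
case: z => j /= hj; rewrite stops_rcons -andbA; apply/and3P; split; try lia.
all: by apply/negP => /psums_le; lia.
Qed.

Lemma Sset_gy_pred j : S (gy j) -> p <= j.+1 -> p <= j.
Proof.
rewrite /= stops_rcons => /andP[/andP[j_gt0 jn] jmu] pj; rewrite leqNgt; apply/negP => jp.
have ej : j = sumn mu0 by lia.
case: mu0 ej jmu j_gt0 => [|t mu1] -> //; by rewrite sumn_in_psums.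
Qed.

Lemma Sset_prime_gy j : S' (gy j) = S (gy j) && (j != n).
Proof.
rewrite /= mu_prime_rcons stops_cat2 stops_rcons mem_rcons inE.
have -> : sumn mu0 + m.-1 = n by lia.
by rewrite negb_or; case: (j == n); rewrite /= ?andbF ?andbT.
Qed.

Lemma Sset_prime_sub z : S' z -> S z.
Proof. by case: z => // j; rewrite Sset_prime_gy => /andP[]. Qed.

Definition movable (k : nat) (z : gen) : bool := S' z && below k z.
Arguments movable k z : simpl never.

Lemma movable_S' k z : movable k z -> S' z.
Proof. by case/andP. Qed.

Lemma movable_top z : S' z -> movable n.+1 z.
Proof.
case: z => j S'z; rewrite /movable S'z /=.
  by case/andP: S'z => /andP[_]; rewrite ltnS.
by move: S'z; rewrite Sset_prime_gy => /andP[/andP[/andP[_ jn] _] /eqP]; lia.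
Qed.

Lemma movable_gx k j : S (gx j) -> j < k -> movable k (gx j).
Proof. by rewrite /movable /= => -> ->. Qed.

Lemma movable_gy k j : k <= n.+1 -> S (gy j) -> j.+1 < k -> movable k (gy j).
Proof. by move=> kn Sy jk; rewrite /movable Sset_prime_gy Sy /= jk andbT; apply/eqP; lia. Qed.

Lemma all_S_rep k eps : p <= k -> all S (rep n k eps).
Proof. by move=> pk; apply: sub_all (blocks_idx n.+1 k eps) => z hz; apply: Sset_high; lia. Qed.

Lemma block_mul_movable k e z : p <= k <= n -> movable k z -> exists h0,
  all (movable k.+1) h0 /\ forall tl, eqG (block k e ++ z :: tl) (h0 ++ block k e ++ tl).
Proof.
move=> /andP[pk kn] /andP[S'z zk]; have Sz := Sset_prime_sub S'z.
have Sxk : S (gx k) by apply: Sset_high; rewrite /=; lia.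
have Syk : S (gy k) by apply: Sset_high; rewrite /=; lia.
have zk1 : below k.+1 z by case: z zk {S'z Sz} => /= j; lia.
have [far|near] := boolP (apart z (gy k)).
  exists [:: z]; split=> [|tl]; first by rewrite /= /movable S'z zk1.
  by apply: eqG_comm_word (Sset_valid) _ _ _ Sz (all_block _ _ _) (all_block _ far far).
case: z S'z Sz zk zk1 near => j S'z Sz /= zk zk1 near; last by rewrite /apart /= in near; lia.
have ek : k = j.+1 by rewrite /apart /= in near; lia.
subst k; have j_gt0 : 0 < j by case/andP: Sz => /andP[].
case: e; last first.
  exists [:: gx j]; split=> [|tl]; first by rewrite /= movable_gx.
  by rewrite /= comm_XV //; [reflexivity | exact: Sset_valid].
exists [:: gx j; gx j.+1; gx j; gx j.+1]; split=> [|tl].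
  by rewrite /= !movable_gx.
exact: (block_succ_mul_gx Sset_valid).
Qed.

Lemma rep_mul_movable k eps h0 : p <= k <= n.+1 -> all (movable k) h0 ->
  exists h, all S' h /\ forall tl, eqG (rep n k eps ++ h0 ++ tl) (h ++ rep n k eps ++ tl).
Proof.
move=> /andP[pk kn]; move: {2}(n.+1 - k) (erefl (n.+1 - k)) => d.
elim: d k pk kn h0 => [|d IH] k pk kn h0 ed mh0.
  have -> : k = n.+1 by lia.
  exists h0; split=> [|tl]; last by rewrite rep_top; reflexivity.
  by apply: sub_all mh0 => z /movable_S'.
elim: h0 mh0 => [_ | z h0 IHh /= /andP[mz mh0]]; first by exists [::]; split=> // tl; reflexivity.
have kn' : k <= n by lia.
have [h1 [mh1 e1]] := block_mul_movable (eps k) (introT andP (conj pk kn')) mz.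
have [h2 [S'h2 e2]] := IH k.+1 ltac:(lia) kn' h1 ltac:(lia) mh1.
have [h3 [S'h3 e3]] := IHh mh0.
exists (h2 ++ h3); split=> [|tl]; first by rewrite all_cat S'h2.
rewrite (rep_rec _ kn') -catA e1 e2 [rep n k.+1 eps ++ _]catA -rep_rec // e3 catA.
reflexivity.
Qed.

(* The coset H itself is the case k = n.+1, where the representative is empty. *)
Definition listed (w : seq gen) : Prop :=
  exists h k eps, [/\ all S' h, p <= k <= n.+1 & eqG w (h ++ rep n k eps)].

Global Instance listed_proper : Proper (eqG ==> iff) listed.
Proof.
move=> u v uv; split=> -[h [k [eps [S'h pk e]]]]; exists h, k, eps; split=> //.
  by rewrite -uv.
by rewrite uv.
Qed.

Lemma listed_rep k eps : p <= k <= n.+1 -> listed (rep n k eps).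
Proof. by move=> pk; exists [::], k, eps; split=> //; reflexivity. Qed.

Lemma listed_movable k eps h0 tl k' eps' : p <= k <= n.+1 -> all (movable k) h0 ->
  p <= k' <= n.+1 -> eqG (rep n k eps ++ tl) (rep n k' eps') ->
  listed (rep n k eps ++ h0 ++ tl).
Proof.
move=> pk mh0 pk' e; have [h [S'h eh]] := rep_mul_movable eps pk mh0.
by exists h, k', eps'; split=> //; rewrite eh e; reflexivity.
Qed.

Lemma listed_movable1 k eps z : p <= k <= n.+1 -> movable k z ->
  listed (rep n k eps ++ [:: z]).
Proof.
move=> pk mz; rewrite -(cats0 [:: z]); apply: (@listed_movable k eps _ _ k eps) => //.
  by rewrite /= mz.
by rewrite cats0; reflexivity.
Qed.

Lemma listed_cat h w : all S' h -> listed w -> listed (h ++ w).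
Proof.
move=> S'h [h' [k [eps [S'h' pk e]]]]; exists (h ++ h'), k, eps.
by split; [rewrite all_cat S'h | | rewrite e catA; reflexivity].
Qed.

Lemma rep_mul_top eps z : S z -> listed (rep n n.+1 eps ++ [:: z]).
Proof.
move=> Sz; have [S'z | nS'z] := boolP (S' z).
  by apply: listed_movable1; [rewrite leqnn andbT; lia | exact: movable_top].
case: z Sz nS'z => j Sz; first by case/negP.
rewrite Sset_prime_gy Sz negbK => /eqP ->.
rewrite -[[:: _]]/(block n false) -rep_rec_upd //; apply: listed_rep; lia.
Qed.

Lemma rep_mul_below k eps z : p <= k <= n -> S z -> gidx z < k ->
  listed (rep n k eps ++ [:: z]).
Proof.
move=> /andP[pk kn] Sz zk; have pkn : p <= k <= n.+1 by rewrite pk; lia.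
have [mz | nmz] := boolP (movable k z); first exact: listed_movable1.
case: z Sz zk nmz => j Sz /= jk; first by rewrite movable_gx.
have [jk1|ek] : j.+1 < k \/ k = j.+1 by lia.
  by rewrite movable_gy //; lia.
subst k => _; have pj : p <= j by apply: Sset_gy_pred.
rewrite -[[:: _]]/(block j false) -rep_rec_upd; [apply: listed_rep | ]; lia.
Qed.

Lemma rep_mul_same k eps z : p <= k <= n -> gidx z = k ->
  listed (rep n k eps ++ [:: z]).
Proof.
move=> /andP[pk kn] zk; have pkn : p <= k <= n.+1 by rewrite pk; lia.
have Sxk : S (gx k) by apply: Sset_high; rewrite /= pk.
have Syk : S (gy k) by apply: Sset_high; rewrite /= pk.
have [->|->] : z = gx k \/ z = gy k by case: z zk => j /= ->; [left | right].
all: rewrite (rep_rec _ kn) -catA.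
  have -> : eqG (block k (eps k) ++ [:: gx k]) (block k (~~ eps k)).
    by case: (eps k); rewrite /= ?(eqG_cancel Sset_valid) //; reflexivity.
  by rewrite -rep_rec_upd //; apply: listed_rep.
case ek: (eps k) => /=; last first.
  by rewrite (eqG_cancel Sset_valid) // cats0; apply: listed_rep; lia.
rewrite -(eqG_braid Sset_valid _ _ Sxk Syk); last by rewrite kn; lia.
apply: (@listed_movable k.+1 eps [:: gx k] (block k true) k eps) => //; first lia.
  by rewrite /= movable_gx.
by rewrite (rep_rec _ kn) ek; reflexivity.
Qed.

Lemma rep_mul_above k eps z : p <= k -> k < gidx z <= n ->
  listed (rep n k eps ++ [:: z]).
Proof.
move=> pk /andP[kz zn]; set a := (gidx z).-1.
have ka : k <= a by rewrite /a; lia.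
have an : a < n by rewrite /a; lia.
have ez : gidx z = a.+1 by rewrite /a; lia.
have a_gt0 : 0 < a by lia.
have Sz : S z by apply: Sset_high; lia.
have [Sxa Sya Sxb Syb] : [/\ S (gx a), S (gy a), S (gx a.+1) & S (gy a.+1)].
  by split; apply: Sset_high; rewrite /=; lia.
rewrite (rep_split eps ka an) -!catA.
rewrite (@eqG_comm_word _ _ Sset_valid z (blocks a k eps) [::] Sz); first last.
- by apply: sub_all (blocks_idx a k eps) => t; rewrite /apart ez; lia.
- by apply: sub_all (blocks_idx a k eps) => t ht; apply: Sset_high; lia.
have [h0 [e1 [e0 [mh0 eh]]]] :=
  block_pair_mul Sset_valid a_gt0 an Sxa Sxb Syb Sya (eps a.+1) (eps a)
  (movable_gx Sxa (ltnW (ltnSn _))) (movable_gx Sxb (ltnSn _))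
  (movable_gy (an : a.+2 <= n.+1) Sya (ltnSn _)) ez.
rewrite eh; apply: (@listed_movable a.+2 eps h0 _ k [eta eps with a.+1 |-> e1, a |-> e0]).
- lia.
- exact: mh0.
- lia.
by rewrite rep_split_upd // cats0; reflexivity.
Qed.

Lemma rep_mul k eps z : p <= k <= n.+1 -> S z -> listed (rep n k eps ++ [:: z]).
Proof.
case/andP=> pk; rewrite leq_eqVlt ltnS => /orP[/eqP -> | kn] Sz; first exact: rep_mul_top.
have zn : gidx z <= n by case: z Sz => j /= /andP[/andP[]].
case: (ltngtP (gidx z) k) => [zk | kz | zk].
- by apply: rep_mul_below => //; rewrite pk.
- by apply: rep_mul_above => //; rewrite kz.
- by apply: rep_mul_same => //; rewrite pk.
Qed.

Lemma listed_all w : all S w -> listed w.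
Proof.
elim/last_ind: w => [_ | w z IH].
  by rewrite -(rep_top n xpred0); apply: listed_rep; rewrite leqnn andbT; lia.
rewrite all_rcons => /andP[Sz /IH [h [k [eps [S'h pk e]]]]].
by rewrite -cats1 e -catA; apply: listed_cat S'h (rep_mul eps pk Sz).
Qed.

End Cosets.

Theorem proposition4 (n : nat) (lam mu : seq nat) :
  1 <= n ->
  decomposition n.+1 lam ->
  decomposition n.+1 mu ->
  1 < last 0 mu ->
  last 0 mu <= last 0 lam ->
  (forall w : word, onS (Sset n lam mu) w ->
     inH n (Sset n lam mu) (Sset n lam (mu_prime mu)) w \/
     exists (k : nat) (eps : nat -> bool),
       n + 2 - last 0 mu <= k <= n /\
       inH n (Sset n lam mu) (Sset n lam (mu_prime mu))
           (w ++ winv (pos (rep n k eps)))) /\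
  (forall (k : nat) (eps : nat -> bool),
     n + 2 - last 0 mu <= k <= n -> all (Sset n lam mu) (rep n k eps)).
Proof.
move=> _ /andP[_ /eqP]; case/lastP: lam => [//|lam0 l]; rewrite sumn_rcons => sum_lam.
case/andP=> _ /eqP; case/lastP: mu => [//|mu0 m]; rewrite sumn_rcons !last_rcons.
move=> sum_mu m_gt1 m_le_l.
split=> [w Sw | k eps /andP[pk _]]; last exact: all_S_rep.
have Sw' : all (Sset n (rcons lam0 l) (rcons mu0 m)) (map snd w) by rewrite all_map.
have [h [k [eps [S'h /andP[pk kn] [_ e]]]]] := listed_all sum_lam sum_mu m_gt1 m_le_l Sw'.
have ew := weq_trans (weq_pos_snd (@Sset_valid _ _ _ _ _) Sw) (e Sw').
have Sr := all_S_rep sum_lam sum_mu m_gt1 m_le_l eps pk.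
case: (leqP k n) => [kn' | kn1].
  by right; exists k, eps; split; [rewrite pk | exact: inH_mul_winv S'h Sr ew].
have ek : k = n.+1 by lia.
left; rewrite -[w]cats0 -[[::]]/(winv (pos [::])); apply: (inH_mul_winv S'h) => //.
by rewrite -(rep_top n eps) -ek.
Qed.
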